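(* If $k\ge4$, then in the setting of the context, $0<\lim_{p\to\infty}\gamma_p(k)\le 3$.
   Context: For integers $k\ge2$, $n\ge1$ and $x\in\mathbb R$: $P_{n,k}(x)=\left(1+\frac{x^{n-1}}{2}\right)^{k+1}-\left(1-\frac{x^{n-1}}{2}\right)^{k+1}$, and for $n>k$: $Q_{n,k}(x)=(k+1)x^{n-k}$. Fix an integer $k\ge2$ and, for each integer $n>k$, an arbitrary $\xi(k;n)\in(0,1)$ with $P_{n,k}(\xi(k;n))=Q_{n,k}(\xi(k;n))$. Let $\alpha=\limsup_{n\to\infty}\xi(k;n)^{n-1}$ and let $(n_p)_{p\in\mathbb N}$ be a strictly increasing sequence of integers $>k$ with $\xi(k;n_p)^{n_p-1}\to\alpha$. For $n>k$ put $$C_n(k)=\frac{\xi(k;n)^{3n-k-2}}{\frac{1}{k+2}\left[\left(1+\frac{\xi(k;n)^{n-1}}{2}\right)^{k+2}-\left(1-\frac{\xi(k;n)^{n-1}}{2}\right)^{k+2}\right]-\xi(k;n)^{n-k}},$$ and $\gamma_p(k)=C_{n_p}(k)$ for $p\in\mathbb N$. *)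

From Stdlib Require Import Reals Lra Lia.
Open Scope R_scope.

Definition Pnk (n k : nat) (x : R) : R :=
  (1 + x ^ (n - 1) / 2) ^ (k + 1) - (1 - x ^ (n - 1) / 2) ^ (k + 1).

(* Q_{n,k}(x) = (k+1) x^{n-k}, used for n > k *)
Definition Qnk (n k : nat) (x : R) : R := INR (k + 1) * x ^ (n - k).

(* C_n(k) evaluated at the chosen root xi = xi(k;n) *)
Definition Cn (n k : nat) (xi : R) : R :=
  xi ^ (3 * n - k - 2) /
  (/ INR (k + 2) *
     ((1 + xi ^ (n - 1) / 2) ^ (k + 2) - (1 - xi ^ (n - 1) / 2) ^ (k + 2))
   - xi ^ (n - k)).

Definition is_limsup (u : nat -> R) (l : R) : Prop :=
  (forall eps, 0 < eps -> exists N, forall n, (N <= n)%nat -> u n < l + eps) /\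
  (forall eps, 0 < eps -> forall N, exists n, (N <= n)%nat /\ l - eps < u n).

From Stdlib Require Import Reals Lra Lia.
From Coquelicot Require Import Coquelicot.
Open Scope R_scope.

(* For a root x = xi(k;n) write y = x^(n-1), t = x^(n-k), s = x^(k-1), so
   that y = t s, and let A_m(y) = (1 + y/2)^m - (1 - y/2)^m.  The equation
   P = Q reads A_{k+1}(y) = (k+1) t, and C_n(k) becomes u(y) / v(y) with
     u(y) = A_{k+1}(y) / ((k+1) y),
     v(y) = (A_{k+2}(y)/(k+2) - A_{k+1}(y)/(k+1)) / y^3.
   The binomial expansion A_m(y) = m y + c_m y^3 + O(y^5) on [0,1], with
   c_m = m(m-1)(m-2)/24, gives u(y) -> 1 and v(y) -> k/12 as y -> 0.
   It remains to show y_p = xi(n_p)^(n_p - 1) -> 0, i.e. alpha = 0: the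
   equation forces c_{k+1} y^3 <= (k+1)(1-s) <= (k+1)(k-1)(1-x), so if y_p
   stayed above a positive level, xi(n_p) would stay below some q < 1 and
   y_p <= q^(n_p - 1) would tend to 0.  Hence C_{n_p}(k) -> 12/k, which lies
   in (0, 3] as k >= 4. *)

Lemma pow_antimono (z : R) (i j : nat) : 0 <= z <= 1 -> (i <= j)%nat -> z ^ j <= z ^ i.
Proof.
  intros Hz Hij; replace j with (i + (j - i))%nat by lia; rewrite pow_add.
  assert (Hi : 0 <= z ^ i) by (apply pow_le; lra).
  induction (j - i)%nat as [|d IH]; simpl; [lra|].
  assert (0 <= z ^ d) by (apply pow_le; lra).
  nra.
Qed.

Lemma one_sub_pow_le (x : R) (m : nat) : 0 <= x <= 1 -> 1 - x ^ m <= INR m * (1 - x).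
Proof.
  intros Hx; induction m as [|m IH]; [simpl; lra|].
  rewrite S_INR; simpl.
  assert (x ^ m <= 1) by (apply (pow_antimono x 0); [lra|lia]).
  nra.
Qed.

(* Odd and even parts (in y) of (1 + y/2)^m, up to a factor 2. *)
Definition Adiff (m : nat) (y : R) : R := (1 + y / 2) ^ m - (1 - y / 2) ^ m.
Definition Bsum (m : nat) (y : R) : R := (1 + y / 2) ^ m + (1 - y / 2) ^ m.

(* Leading coefficients: A_m(y) = m y + cub m y^3 + ..., B_m(y) = 2 + quad m y^2 + ... *)
Definition cub (m : nat) : R := INR m * (INR m - 1) * (INR m - 2) / 24.
Definition quad (m : nat) : R := INR m * (INR m - 1) / 4.

(* One-step recursions: multiplying by (1 +- y/2) mixes the odd and even parts,
   and the coefficients follow the corresponding Pascal-type recursions. *)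
Lemma Adiff_S (m : nat) (y : R) : Adiff (S m) y = Adiff m y + y / 2 * Bsum m y.
Proof. unfold Adiff, Bsum; simpl; ring. Qed.

Lemma Bsum_S (m : nat) (y : R) : Bsum (S m) y = Bsum m y + y / 2 * Adiff m y.
Proof. unfold Adiff, Bsum; simpl; ring. Qed.

Lemma cub_S (m : nat) : cub (S m) = cub m + quad m / 2.
Proof. unfold cub, quad; rewrite S_INR; field. Qed.

Lemma quad_S (m : nat) : quad (S m) = quad m + INR m / 2.
Proof. unfold quad; rewrite S_INR; field. Qed.

Lemma cub_nonneg (m : nat) : 0 <= cub m.
Proof.
  unfold cub; destruct m as [|[|m]]; [simpl; lra | simpl; lra|].
  rewrite !S_INR; pose proof (pos_INR m).
  apply Rmult_le_pos; [|lra].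
  apply Rmult_le_pos; [apply Rmult_le_pos|]; lra.
Qed.

Lemma cub_pos (k : nat) : (2 <= k)%nat -> 0 < cub (k + 1).
Proof.
  intros Hk; assert (H2 : 2 <= INR k) by (apply (le_INR 2); exact Hk).
  unfold cub; rewrite plus_INR; simpl INR.
  apply Rmult_lt_0_compat; [|lra].
  apply Rmult_lt_0_compat; [apply Rmult_lt_0_compat|]; lra.
Qed.

Lemma cub_slope (k : nat) : cub (k + 2) / INR (k + 2) - cub (k + 1) / INR (k + 1) = INR k / 12.
Proof.
  assert (0 <= INR k) by apply pos_INR.
  unfold cub; rewrite !plus_INR; simpl INR; field; lra.
Qed.

(* On [0,1], A_m and B_m agree with their Taylor polynomials up to nonnegative
   remainders of order y^5 and y^4; the two are proved together since each
   recursion involves the other. *)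
Lemma Adiff_Bsum_expansion (m : nat) : exists K J, 0 <= K /\ 0 <= J /\
  forall y, 0 <= y <= 1 ->
  (INR m * y + cub m * y ^ 3 <= Adiff m y <= INR m * y + cub m * y ^ 3 + K * y ^ 5) /\
  (2 + quad m * y ^ 2 <= Bsum m y <= 2 + quad m * y ^ 2 + J * y ^ 4).
Proof.
  induction m as [|m IH].
  - exists 0, 0; split; [lra|split; [lra|]]; intros y Hy.
    unfold Adiff, Bsum, cub, quad; simpl; lra.
  - destruct IH as [K [J [HK [HJ H]]]].
    exists (K + J / 2), (J + cub m / 2 + K / 2).
    pose proof (cub_nonneg m) as Hc.
    split; [lra|split; [lra|]]; intros y Hy.
    destruct (H y Hy) as [[A1 A2] [B1 B2]].
    rewrite Adiff_S, Bsum_S, cub_S, quad_S, S_INR.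
    assert (Hy2 : 0 <= y / 2) by lra.
    pose proof (Rmult_le_compat_l _ _ _ Hy2 A1).
    pose proof (Rmult_le_compat_l _ _ _ Hy2 A2).
    pose proof (Rmult_le_compat_l _ _ _ Hy2 B1).
    pose proof (Rmult_le_compat_l _ _ _ Hy2 B2).
    assert (y4 : 0 <= y ^ 4) by (apply pow_le; lra).
    assert (y6 : y ^ 6 <= y ^ 4) by (apply pow_antimono; [lra|lia]).
    assert (0 <= cub m * y ^ 4) by (apply Rmult_le_pos; lra).
    split; split; nra.
Qed.

Lemma Adiff_expansion (m : nat) : (0 < m)%nat -> exists K, 0 <= K /\
  forall y, 0 <= y <= 1 ->
  0 <= Adiff m y / INR m - (y + cub m / INR m * y ^ 3) <= K * y ^ 5.
Proof.
  intros Hm; assert (Hm' : 0 < INR m) by (apply lt_0_INR; exact Hm).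
  destruct (Adiff_Bsum_expansion m) as [K [J [HK [_ H]]]].
  exists (K / INR m); split; [apply Rdiv_le_0_compat; lra|].
  intros y Hy; destruct (H y Hy) as [[A1 A2] _].
  replace (Adiff m y / INR m - (y + cub m / INR m * y ^ 3))
    with ((Adiff m y - (INR m * y + cub m * y ^ 3)) / INR m) by (field; lra).
  replace (K / INR m * y ^ 5) with (K * y ^ 5 / INR m) by (field; lra).
  split; [apply Rdiv_le_0_compat; lra|].
  apply Rmult_le_compat_r; [left; apply Rinv_0_lt_compat|]; lra.
Qed.

(* The two factors of C_n(k) at a root, as functions of y = x^(n-1):
   u(y) = A_m(y) / (m y) (with m = k+1) and
   v(y) = (A_{k+2}(y)/(k+2) - A_{k+1}(y)/(k+1)) / y^3. *)
Definition lin_ratio (m : nat) (y : R) : R := Adiff m y / (INR m * y).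
Definition cubic_gap (k : nat) (y : R) : R :=
  (Adiff (k + 2) y / INR (k + 2) - Adiff (k + 1) y / INR (k + 1)) / y ^ 3.

Lemma is_lim_seq_quadratic_error (w y : nat -> R) (L M : R) :
  is_lim_seq y 0 -> (forall p, Rabs (w p - L) <= M * y p ^ 2) -> is_lim_seq w L.
Proof.
  intros Hy Hw.
  assert (Hsq : forall c, is_lim_seq (fun p => L + c * y p ^ 2) L).
  { intros c.
    assert (Hc : is_lim_seq (fun p => L + c * (y p * y p)) (L + c * (0 * 0))).
    { apply is_lim_seq_plus'; [apply is_lim_seq_const|].
      apply is_lim_seq_mult'; [apply is_lim_seq_const|].
      apply is_lim_seq_mult'; exact Hy. }
    replace (L + c * (0 * 0)) with L in Hc by ring.
    eapply is_lim_seq_ext; [|exact Hc]; intros p; simpl; ring. }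
  apply is_lim_seq_le_le with (u := fun p => L + (- M) * y p ^ 2)
                              (w := fun p => L + M * y p ^ 2); [|apply Hsq|apply Hsq].
  intros p; specialize (Hw p); apply Rabs_le_between in Hw.
  replace (- M * y p ^ 2) with (- (M * y p ^ 2)) by ring; lra.
Qed.

(* u(y) -> 1 as y -> 0+: the cubic term and the remainder are O(y^2). *)
Lemma lin_ratio_lim (m : nat) (y : nat -> R) : (0 < m)%nat ->
  (forall p, 0 < y p <= 1) -> is_lim_seq y 0 ->
  is_lim_seq (fun p => lin_ratio m (y p)) 1.
Proof.
  intros Hm Hy Hlim.
  assert (Hm' : 0 < INR m) by (apply lt_0_INR; exact Hm).
  destruct (Adiff_expansion m Hm) as [K [HK HE]].
  apply (is_lim_seq_quadratic_error _ y 1 (cub m / INR m + K) Hlim).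
  intros p; destruct (Hy p) as [z0 z1]; set (z := y p) in *.
  set (E := Adiff m z / INR m - (z + cub m / INR m * z ^ 3)).
  assert (HEz : 0 <= E <= K * z ^ 5) by (apply HE; lra).
  assert (Hc : 0 <= cub m / INR m * z ^ 2)
    by (apply Rmult_le_pos; [apply Rdiv_le_0_compat; [apply cub_nonneg|lra]|apply pow_le; lra]).
  assert (HEq : lin_ratio m z - 1 = cub m / INR m * z ^ 2 + E / z)
    by (unfold lin_ratio, E; field; lra).
  assert (HEy : 0 <= E / z <= K * z ^ 2).
  { split; [apply Rdiv_le_0_compat; lra|].
    apply Rle_div_l; [lra|].
    assert (z ^ 5 <= z ^ 3) by (apply pow_antimono; [lra|lia]).
    replace (K * z ^ 2 * z) with (K * z ^ 3) by ring; nra. }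
  rewrite HEq, Rabs_pos_eq by lra; lra.
Qed.

(* v(y) -> k/12 as y -> 0+, since c_{k+2}/(k+2) - c_{k+1}/(k+1) = k/12. *)
Lemma cubic_gap_lim (k : nat) (y : nat -> R) :
  (forall p, 0 < y p <= 1) -> is_lim_seq y 0 ->
  is_lim_seq (fun p => cubic_gap k (y p)) (INR k / 12).
Proof.
  intros Hy Hlim.
  assert (m1 : 0 < INR (k + 1)) by (apply lt_0_INR; lia).
  assert (m2 : 0 < INR (k + 2)) by (apply lt_0_INR; lia).
  destruct (Adiff_expansion (k + 1)) as [K1 [HK1 HE1]]; [lia|].
  destruct (Adiff_expansion (k + 2)) as [K2 [HK2 HE2]]; [lia|].
  apply (is_lim_seq_quadratic_error _ y _ (K1 + K2) Hlim).
  intros p; destruct (Hy p) as [z0 z1]; set (z := y p) in *.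
  set (E1 := Adiff (k + 1) z / INR (k + 1) - (z + cub (k + 1) / INR (k + 1) * z ^ 3)).
  set (E2 := Adiff (k + 2) z / INR (k + 2) - (z + cub (k + 2) / INR (k + 2) * z ^ 3)).
  assert (H1 : 0 <= E1 <= K1 * z ^ 5) by (apply HE1; lra).
  assert (H2 : 0 <= E2 <= K2 * z ^ 5) by (apply HE2; lra).
  assert (Hz3 : 0 < z ^ 3) by (apply pow_lt; lra).
  assert (HEq : cubic_gap k z - INR k / 12 = (E2 - E1) / z ^ 3).
  { rewrite <- (cub_slope k); unfold cubic_gap, E1, E2; field; lra. }
  rewrite HEq, Rabs_div, (Rabs_pos_eq (z ^ 3)) by lra.
  apply Rle_div_l; [lra|].
  replace ((K1 + K2) * z ^ 2 * z ^ 3) with (K1 * z ^ 5 + K2 * z ^ 5) by ring.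
  apply Rabs_le; lra.
Qed.

Section AtRoot.

Variables (n k : nat) (x : R).
Hypotheses (Hkn : (k < n)%nat) (Hx : 0 < x < 1) (Hroot : Pnk n k x = Qnk n k x).

Lemma root_equation : Adiff (k + 1) (x ^ (n - 1)) = INR (k + 1) * x ^ (n - k).
Proof. exact Hroot. Qed.

Lemma Cn_at_root : Cn n k x = lin_ratio (k + 1) (x ^ (n - 1)) / cubic_gap k (x ^ (n - 1)).
Proof.
  assert (Hpow : x ^ (3 * n - k - 2) = (x ^ (n - 1)) ^ 2 * x ^ (n - k))
    by (rewrite <- pow_mult, <- pow_add; f_equal; lia).
  assert (m1 : 0 < INR (k + 1)) by (apply lt_0_INR; lia).
  assert (m2 : 0 < INR (k + 2)) by (apply lt_0_INR; lia).
  assert (Hy : 0 < x ^ (n - 1)) by (apply pow_lt; lra).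
  pose proof root_equation as Heq.
  unfold Cn, lin_ratio, cubic_gap; rewrite Hpow.
  set (y := x ^ (n - 1)) in *; set (t := x ^ (n - k)) in *.
  replace t with (Adiff (k + 1) y / INR (k + 1)) by (rewrite Heq; field; lra).
  set (D := Adiff (k + 2) y / INR (k + 2) - Adiff (k + 1) y / INR (k + 1)).
  replace (/ INR (k + 2) * ((1 + y / 2) ^ (k + 2) - (1 - y / 2) ^ (k + 2))
           - Adiff (k + 1) y / INR (k + 1)) with D by (unfold D, Adiff; field; lra).
  destruct (Req_dec D 0) as [HD|HD].
  - rewrite HD; unfold Rdiv; rewrite Rmult_0_l, Rinv_0, !Rmult_0_r; reflexivity.
  - field; split; [lra | split; [lra | exact HD]].
Qed.

(* The equation keeps x quantitatively away from 1:
   c_{k+1} y^3 <= (k+1)(1 - x^(k-1)) <= (k+1)(k-1)(1 - x). *)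
Lemma root_gap : (1 <= k)%nat ->
  cub (k + 1) * (x ^ (n - 1)) ^ 3 <= INR (k + 1) * INR (k - 1) * (1 - x).
Proof.
  intros Hk.
  pose proof root_equation as Heq.
  assert (Hsplit : x ^ (n - 1) = x ^ (n - k) * x ^ (k - 1))
    by (rewrite <- pow_add; f_equal; lia).
  assert (m1 : 0 < INR (k + 1)) by (apply lt_0_INR; lia).
  assert (Hy : 0 <= x ^ (n - 1) <= 1)
    by (split; [apply pow_le; lra | apply (pow_antimono x 0); [lra|lia]]).
  assert (Ht : 0 < x ^ (n - k) <= 1)
    by (split; [apply pow_lt; lra | apply (pow_antimono x 0); [lra|lia]]).
  assert (Hs : 0 <= x ^ (k - 1) <= 1)
    by (split; [apply pow_le; lra | apply (pow_antimono x 0); [lra|lia]]).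
  assert (Hbern : 1 - x ^ (k - 1) <= INR (k - 1) * (1 - x)) by (apply one_sub_pow_le; lra).
  set (y := x ^ (n - 1)) in *; set (t := x ^ (n - k)) in *; set (s := x ^ (k - 1)) in *.
  destruct (Adiff_Bsum_expansion (k + 1)) as [K [J [_ [_ Hexp]]]].
  destruct (Hexp y Hy) as [[Hlow _] _].
  assert (Hmid : cub (k + 1) * y ^ 3 <= INR (k + 1) * (1 - s)).
  { assert (0 <= INR (k + 1) * (1 - s)) by (apply Rmult_le_pos; lra).
    assert (INR (k + 1) * t * (1 - s) <= INR (k + 1) * (1 - s)) by nra.
    assert (INR (k + 1) * y = INR (k + 1) * t * s) by (rewrite Hsplit; ring).
    lra. }
  assert (INR (k + 1) * (1 - s) <= INR (k + 1) * (INR (k - 1) * (1 - x)))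
    by (apply Rmult_le_compat_l; lra).
  lra.
Qed.

End AtRoot.

(* If y_p = x_p^(e_p) with x_p in (0,1), e_p >= p and c y_p^3 <= 1 - x_p for
   some c > 0, then y_p can only converge to 0: a positive limit would force
   x_p <= q < 1 eventually, hence y_p <= q^p -> 0. *)
Lemma power_limit_vanishes (x : nat -> R) (e : nat -> nat) (c alpha : R) :
  0 < c -> (forall p, 0 < x p < 1) -> (forall p, (p <= e p)%nat) ->
  (forall p, c * (x p ^ e p) ^ 3 <= 1 - x p) ->
  is_lim_seq (fun p => x p ^ e p) alpha -> alpha = 0.
Proof.
  intros Hc Hx He Hgap Hlim.
  assert (Hpos : Rbar_le 0 alpha).
  { apply (is_lim_seq_le (fun _ => 0) (fun p => x p ^ e p));
      [|apply is_lim_seq_const|exact Hlim].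
    intros p; apply pow_le; specialize (Hx p); lra. }
  simpl in Hpos; destruct (Rle_lt_or_eq_dec 0 alpha Hpos) as [Halpha|]; [exfalso|auto].
  set (q := 1 - c * (alpha / 2) ^ 3).
  assert (Hq1 : q < 1)
    by (unfold q; assert (0 < (alpha / 2) ^ 3) by (apply pow_lt; lra); nra).
  destruct (proj2 (is_lim_seq_spec _ _) Hlim (mkposreal (alpha / 2) ltac:(lra))) as [N HN].
  assert (Hxq : forall p, (N <= p)%nat -> x p <= q).
  { intros p Hp; specialize (HN p Hp); simpl in HN; apply Rabs_lt_between' in HN.
    assert ((alpha / 2) ^ 3 <= (x p ^ e p) ^ 3) by (apply pow_incr; lra).
    specialize (Hgap p); unfold q; nra. }
  assert (Hq0 : 0 < q) by (specialize (Hxq N (le_n N)); specialize (Hx N); lra).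
  assert (Hnear : eventually (fun p => x p ^ e p <= q ^ p)).
  { exists N; intros p Hp; specialize (Hxq p Hp); specialize (Hx p).
    apply Rle_trans with (q ^ e p); [apply pow_incr; lra|].
    apply pow_antimono; [lra|apply He]. }
  assert (Hle := is_lim_seq_le_loc _ _ alpha 0 Hnear Hlim
                   (is_lim_seq_geom q ltac:(rewrite Rabs_pos_eq; lra))).
  simpl in Hle; lra.
Qed.

Lemma strict_mono_shift (np : nat -> nat) :
  (forall p, (np p < np (S p))%nat) -> forall p, (np 0 + p <= np p)%nat.
Proof. intros Hinc p; induction p as [|p IH]; [lia|]; specialize (Hinc p); lia. Qed.

Lemma root_powers_vanish (k : nat) (xi : nat -> R) (np : nat -> nat) (alpha : R) :
  (2 <= k)%nat ->
  (forall p, 0 < xi (np p) < 1 /\ Pnk (np p) k (xi (np p)) = Qnk (np p) k (xi (np p))) ->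
  (forall p, (np p < np (S p))%nat) -> (forall p, (k < np p)%nat) ->
  Un_cv (fun p => xi (np p) ^ (np p - 1)) alpha -> alpha = 0.
Proof.
  intros Hk Hroot Hinc Hgt Hcv.
  assert (m1 : 0 < INR (k + 1)) by (apply lt_0_INR; lia).
  assert (m2 : 0 < INR (k - 1)) by (apply lt_0_INR; lia).
  assert (Hc : 0 < INR (k + 1) * INR (k - 1)) by (apply Rmult_lt_0_compat; lra).
  apply (power_limit_vanishes (fun p => xi (np p)) (fun p => np p - 1)%nat
           (cub (k + 1) / (INR (k + 1) * INR (k - 1))));
    [apply Rdiv_lt_0_compat; [apply cub_pos; lia|exact Hc] | apply Hroot | | |].
  - intros p; pose proof (strict_mono_shift np Hinc p); specialize (Hgt 0%nat); lia.
  - intros p; destruct (Hroot p) as [Hx Hpq].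
    pose proof (root_gap (np p) k (xi (np p)) (Hgt p) Hx Hpq ltac:(lia)).
    replace (cub (k + 1) / (INR (k + 1) * INR (k - 1)) * (xi (np p) ^ (np p - 1)) ^ 3)
      with (cub (k + 1) * (xi (np p) ^ (np p - 1)) ^ 3 / (INR (k + 1) * INR (k - 1)))
      by (field; split; lra).
    apply Rle_div_l; [exact Hc|]; lra.
  - apply is_lim_seq_Reals; exact Hcv.
Qed.

Theorem corollary5p7 (k : nat) (hk : (4 <= k)%nat)
  (xi : nat -> R)
  (hxi : forall n : nat, (k < n)%nat ->
     0 < xi n < 1 /\ Pnk n k (xi n) = Qnk n k (xi n))
  (alpha : R)
  (halpha : is_limsup (fun n => xi n ^ (n - 1)) alpha)
  (np : nat -> nat)
  (hnp_inc : forall p, (np p < np (S p))%nat)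
  (hnp_gt : forall p, (k < np p)%nat)
  (hnp_cv : Un_cv (fun p => xi (np p) ^ (np p - 1)) alpha) :
  exists L : R,
    Un_cv (fun p => Cn (np p) k (xi (np p))) L /\ 0 < L <= 3.
Proof.
  assert (Hk : 4 <= INR k) by (replace 4 with (INR 4) by (simpl; lra); apply le_INR; exact hk).
  pose proof (fun p => hxi (np p) (hnp_gt p)) as Hroot.
  set (y := fun p => xi (np p) ^ (np p - 1)).
  assert (Hy : forall p, 0 < y p <= 1).
  { intros p; destruct (Hroot p) as [Hx _]; unfold y.
    split; [apply pow_lt; lra | apply (pow_antimono _ 0); [lra|lia]]. }
  assert (Hy0 : is_lim_seq y 0).
  { replace 0 with alpha; [apply is_lim_seq_Reals; exact hnp_cv|].
    apply (root_powers_vanish k xi np); [lia | exact Hroot | exact hnp_inc | exact hnp_gt | exact hnp_cv]. }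
  (* Hence C_{n_p}(k) = u(y_p) / v(y_p) -> 1 / (k/12) = 12/k. *)
  exists (12 / INR k); split.
  - apply is_lim_seq_Reals.
    apply is_lim_seq_ext with (u := fun p => lin_ratio (k + 1) (y p) / cubic_gap k (y p)).
    { intros p; destruct (Hroot p) as [Hx Hpq]; symmetry; exact (Cn_at_root _ _ _ (hnp_gt p) Hx Hpq). }
    apply (is_lim_seq_div _ _ 1 (INR k / 12));
      [apply lin_ratio_lim; [lia|exact Hy|exact Hy0] | apply cubic_gap_lim; [exact Hy|exact Hy0] | |].
    + intros E; injection E; lra.
    + unfold is_Rbar_div, is_Rbar_mult; simpl; f_equal; f_equal; field; lra.
  - split; [apply Rdiv_lt_0_compat; lra|].
    apply Rle_div_l; lra.
Qed.
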